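(* The generating series $f(q;x)=\sum_\gamma q^{\omega_{HU}(\gamma)+\omega_{DH}(\gamma)+\omega_{DU}(\gamma)+\omega_{HH}(\gamma)}x^{|\gamma|}$, where $\gamma$ ranges over all Motzkin paths and $|\gamma|$ is the length, is $$f(q;x)=\frac{1-qx-(1-q)x^2-\sqrt{(1+x)\big(1-(1+2q)x-(1-q^2)x^2+(1-q)^2x^3\big)}}{2qx^2}.$$
   Context: Steps: $U=(1,1)$, $D=(1,-1)$, $H=(1,0)$. A Motzkin path of length $n$ is a lattice path from $(0,0)$ to $(n,0)$ with steps $U,D,H$ never going below the $x$-axis. Paths are identified with words of steps, and $\omega_\alpha(\gamma)$ is the number of occurrences of the word $\alpha$ as a factor (contiguous subword, overlapping occurrences counted separately) of $\gamma$. *)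

From HB Require Import structures.
From mathcomp Require Import all_boot all_order all_algebra.
Set Implicit Arguments. Unset Strict Implicit. Unset Printing Implicit Defensive.
Import Order.TTheory GRing.Theory Num.Theory.

(* Steps U=(1,1), D=(1,-1), H=(1,0). *)
Inductive step := U | D | H.

Definition step_eqb (a b : step) : bool :=
  match a, b with U, U | D, D | H, H => true | _, _ => false end.
Lemma step_eqP : Equality.axiom step_eqb.
Proof. by case; case; constructor. Qed.
HB.instance Definition _ := hasDecEq.Build step step_eqP.

Definition dh (s : step) : int :=
  match s with U => 1%R | D => (-1)%R | H => 0%R end.
Definition height (w : seq step) : int := (\sum_(s <- w) dh s)%R.

Definition motzkin (w : seq step) : bool :=
  all (fun i => (0 <= height (take i w))%R) (iota 0 (size w).+1)
  && (height w == 0%R).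

Fixpoint words (n : nat) : seq (seq step) :=
  match n with
  | 0 => [:: [::]]
  | n'.+1 => flatten [seq [:: U :: w; D :: w; H :: w] | w <- words n']
  end.

(* omega_alpha(gamma): number of (possibly overlapping) occurrences of alpha
   as a factor of gamma *)
Definition occ (alpha gamma : seq step) : nat :=
  count (fun i => take (size alpha) (drop i gamma) == alpha) (iota 0 (size gamma)).

Definition stat (g : seq step) : nat :=
  occ [:: H; U] g + occ [:: D; H] g + occ [:: D; U] g + occ [:: H; H] g.

Local Open Scope ring_scope.

(* Coefficient of x^n in f(q;x), a polynomial in q (q = 'X). *)
Definition motz_coef (n : nat) : {poly rat} :=
  \sum_(w <- words n | motzkin w) 'X^(stat w).

(* Formal power series in x with coefficients in Q[q]. *)
Definition fps := nat -> {poly rat}.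
Definition fps_of (cs : seq {poly rat}) : fps := fun n => nth 0 cs n.
Definition fmul (f g : fps) : fps := fun n => \sum_(i < n.+1) f i * g (n - i)%N.
Definition fsub (f g : fps) : fps := fun n => f n - g n.

(* Square root of a formal power series (with constant term 1): the unique
   series s with s_0 = 1 and s*s = p, computed by
   s_n = (p_n - sum_{i=1}^{n-1} s_i s_{n-i}) / 2. *)
Fixpoint sqrt_seq (p : fps) (n : nat) : seq {poly rat} :=
  match n with
  | 0 => [:: 1]
  | n'.+1 => let s := sqrt_seq p n' in
      rcons s (((2%:R : rat)^-1)%:P *
               (p n - \sum_(1 <= i < n) nth 0 s i * nth 0 s (n - i)%N))
  end.
Definition fsqrt (p : fps) : fps := fun n => nth 0 (sqrt_seq p n) n.

Definition f_series : fps := motz_coef.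
Definition radicand : fps :=
  fmul (fps_of [:: 1; 1])
       (fps_of [:: 1; - (1 + 2%:R * 'X); - (1 - 'X ^+ 2); (1 - 'X) ^+ 2]).
Definition numer_poly : fps := fps_of [:: 1; - 'X; - (1 - 'X)].
Definition denom : fps := fps_of [:: 0; 0; 2%:R * 'X].

From mathcomp Require Import all_boot all_order all_algebra.
From mathcomp Require Import ring zify.
Import Order.TTheory GRing.Theory Num.Theory.
Set Implicit Arguments. Unset Strict Implicit. Unset Printing Implicit Defensive.

(* The four counted factors HU, DH, DU, HH are exactly the adjacent pairs (a,b)
   with a <> U and b <> D, so the statistic is a sum of local pair weights.
   A nonempty Motzkin path is either H.w or U.a.D.b with a, b Motzkin (first
   return decomposition).  Tracking the pair weights across the cuts gives,
   with f_n = motz_coef n and h_n = (n == 0 ? 1 : q f_n),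
       f_{n+1} = h_n + sum_{i+j = n-1} f_i h_j,
   i.e. F = 1 + x H + x^2 F H with H = (1-q) + q F.  Hence S = N - 2 q x^2 F
   (N the numerator polynomial) satisfies S^2 = (radicand) + 4 q x^2 E, where
   E = 1 + x H + x^2 F H - F vanishes; a ring identity checks this.  Since
   S_0 = 1 and a power series square root with constant term 1 is unique,
   S = fsqrt radicand, which is the theorem.  All series identities are
   proved on truncations, i.e. in the polynomial ring Q[q][x]. *)

Fixpoint motz_from (c : nat) (w : seq step) : bool :=
  match w with
  | [::] => c == 0
  | U :: w' => motz_from c.+1 w'
  | D :: w' => if c is c'.+1 then motz_from c' w' else false
  | H :: w' => motz_from c w'
  end.

(* Weight of the pair formed by the step a and the first step of w: the pair
   is one of HU, DH, DU, HH iff a <> U and the next step is not D. *)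
Definition pair_weight (a : step) (w : seq step) : nat :=
  match w with [::] => 0 | b :: _ => ((a != U) && (b != D) : nat) end.

Fixpoint weight (w : seq step) : nat :=
  match w with [::] => 0 | a :: w' => pair_weight a w' + weight w' end.

Lemma height_nil : height [::] = 0%R.
Proof. by rewrite /height big_nil. Qed.

Lemma height_cons s w : height (s :: w) = (dh s + height w)%R.
Proof. by rewrite /height big_cons. Qed.

Lemma iota0S n : iota 0 n.+1 = 0 :: map S (iota 0 n).
Proof. by rewrite /= -[1]addn0 iotaDl. Qed.

Definition prefixes_nonneg (c : int) (w : seq step) : bool :=
  all (fun i => (0 <= c + height (take i w))%R) (iota 0 (size w).+1).

Lemma prefixes_nonneg_cons c s w :
  prefixes_nonneg c (s :: w) = (0 <= c)%R && prefixes_nonneg (c + dh s)%R w.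
Proof.
rewrite /prefixes_nonneg (iota0S (size w).+1).
have all_cons (a : pred nat) x t : all a (x :: t) = a x && all a t by [].
rewrite all_cons all_map; congr (_ && _); first by rewrite take0 height_nil addr0.
by apply: eq_all => i /=; rewrite height_cons addrA.
Qed.

Lemma motz_fromE (c : nat) w :
  prefixes_nonneg c%:Z w && (c%:Z + height w == 0)%R = motz_from c w.
Proof.
elim: w c => [|s w IH] c.
  by rewrite /prefixes_nonneg /= height_nil !addr0; case: c.
rewrite prefixes_nonneg_cons height_cons addrA le0z_nat andTb.
case: s => /=.
- by rewrite -(IH c.+1) -addn1 PoszD.
- case: c => [|c]; first by rewrite /prefixes_nonneg /= take0 height_nil.
  by rewrite -(IH c) -addn1 PoszD addrK.
- by rewrite -(IH c) addr0.
Qed.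

Lemma motzkinE w : motzkin w = motz_from 0 w.
Proof.
rewrite -motz_fromE /motzkin /prefixes_nonneg add0r; congr (_ && _).
by apply: eq_all => i /=; rewrite add0r.
Qed.

Lemma occ_cons p a w :
  occ p (a :: w) = ((take (size p) (a :: w) == p) + occ p w)%N.
Proof. by rewrite /occ [size _]/= iota0S /= count_map. Qed.

Lemma statE w : stat w = weight w.
Proof.
elim: w => [|a w IH] //=.
rewrite -IH /stat !occ_cons.
case: w {IH} => [|b w]; first by case: a.
by case: a; case: b => /=; rewrite ?take0 /=; lia.
Qed.

Lemma mem_words n w : (w \in words n) = (size w == n).
Proof.
elim: n w => [|n IH] w; first by case: w.
apply/flatten_mapP/idP.
  by case=> v; rewrite IH => /eqP <-; rewrite !inE => /or3P [] /eqP ->.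
case: w => [|s w] //= Hs; exists w; first by rewrite IH.
by case: s; rewrite !inE eqxx ?orbT.
Qed.

Lemma uniq_words n : uniq (words n).
Proof.
elim: n => [|n IH] //=.
elim: (words n) IH => [|v s IHs] //= /andP [vs us].
have notin_rest t :
    t :: v \notin flatten [seq [:: U :: w; D :: w; H :: w] | w <- s].
  apply/negP => /flatten_mapP [y ys]; rewrite !inE.
  by move=> /or3P [] /eqP [_ Hy]; move: vs; rewrite Hy ys.
by rewrite !inE !notin_rest IHs.
Qed.

Local Open Scope ring_scope.

Lemma sum_words_succ (R : nmodType) n (P : pred (seq step)) (G : seq step -> R) :
  \sum_(w <- words n.+1 | P w) G w =
  \sum_(w <- words n) ((if P (U :: w) then G (U :: w) else 0) +
                      (if P (D :: w) then G (D :: w) else 0) +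
                      (if P (H :: w) then G (H :: w) else 0)).
Proof.
rewrite /= big_flatten big_map; apply: eq_bigr => w _.
rewrite !big_cons big_nil /=.
by case: (P (U :: w)); case: (P (D :: w)); case: (P (H :: w));
  rewrite ?addr0 ?add0r ?addrA.
Qed.

Fixpoint first_return (k : nat) (w : seq step) : seq step * seq step :=
  match w with
  | [::] => ([::], [::])
  | U :: w' => let p := first_return k.+1 w' in (U :: p.1, p.2)
  | H :: w' => let p := first_return k w' in (H :: p.1, p.2)
  | D :: w' => if k is k'.+1 then let p := first_return k' w' in (D :: p.1, p.2)
               else ([::], w')
  end.

Lemma first_return_split c w k : motz_from (k + c.+1) w ->
  let p := first_return k w in
  [/\ w = p.1 ++ D :: p.2, motz_from k p.1 & motz_from c p.2].
Proof.
elim: w k => [|s w IH] k /=; first by rewrite addnS.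
case: s => /=.
- by move=> /(IH k.+1) [E1 E2 E3]; rewrite -E1.
- by case: k => [|k] //= /(IH k) [E1 E2 E3]; rewrite -E1.
- by move=> /(IH k) [E1 E2 E3]; rewrite -E1.
Qed.

Lemma first_return_cat k a b :
  motz_from k a -> first_return k (a ++ D :: b) = (a, b).
Proof.
elim: a k => [|s a IH] k /=; first by move/eqP ->.
by case: s => /=; [move=> /IH -> | case: k => [|k] // /IH -> | move=> /IH ->].
Qed.

Lemma motz_from_cat k c a b :
  motz_from k a -> motz_from c b -> motz_from (k + c.+1) (a ++ D :: b).
Proof.
elim: a k => [|s a IH] k /=; first by move/eqP -> => /=.
case: s => /=.
- by move=> /IH Hb /Hb; rewrite addSn.
- by case: k => [|k] // /IH.
- by move=> /IH.
Qed.

(* The pair (last step of a, D) is never counted, so the weight splits at a D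
   step. *)
Lemma weight_cat a b : weight (a ++ D :: b) = (weight a + weight (D :: b))%N.
Proof.
elim: a => [|s a IH] //=.
rewrite IH addnA; congr (_ + _)%N.
by case: a {IH} => [|? ?] /=; rewrite ?andbF.
Qed.

(* Walks of length n+1 from height 1 whose first return happens after i steps
   are in bijection with pairs of Motzkin words of lengths i and n - i. *)
Lemma sum_from1_at (R : nmodType) n (i : 'I_n.+1) (G : seq step -> R) :
  \sum_(w <- words n.+1 | motz_from 1 w && (size (first_return 0 w).1 == i)) G w =
  \sum_(a <- words i | motz_from 0 a)
    \sum_(b <- words (n - i) | motz_from 0 b) G (a ++ D :: b).
Proof.
rewrite -big_filter.
have -> : \sum_(a <- words i | motz_from 0 a)
            \sum_(b <- words (n - i) | motz_from 0 b) G (a ++ D :: b) =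
    \sum_(w <- [seq a ++ D :: b | a <- [seq a <- words i | motz_from 0 a],
                   b <- [seq b <- words (n - i) | motz_from 0 b]]) G w.
  by rewrite big_allpairs_dep big_filter; apply: eq_bigr => a _; rewrite big_filter.
apply: perm_big; apply: uniq_perm.
- exact/filter_uniq/uniq_words.
- (* distinct pairs glue to distinct words: the cut recovers the pieces *)
  apply: allpairs_uniq; try exact/filter_uniq/uniq_words.
  move=> [a b] [a' b'] /allpairsP [[x y] [/= xA _ [-> ->]]]
    /allpairsP [[x' y'] [/= xA' _ [-> ->]]] /= E.
  move: xA xA'; rewrite !mem_filter => /andP [m0 _] /andP [m0' _].
  by rewrite -(first_return_cat _ m0) -(first_return_cat _ m0') E.
move=> w; apply/idP/idP.
  rewrite mem_filter mem_words => /andP [/andP [m1 /eqP si] /eqP sw].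
  have [E1 E2 E3] := first_return_split (k := 0) (c := 0) m1.
  apply/allpairsP; exists (first_return 0 w); split => //.
    by rewrite mem_filter E2 mem_words si eqxx.
  rewrite mem_filter E3 mem_words /=; apply/eqP.
  by move: sw; rewrite {1}E1 size_cat /= si; lia.
move=> /allpairsP [[a b] [/=]]; rewrite !mem_filter !mem_words.
move=> /andP [ma /eqP sa] /andP [mb /eqP sb] ->.
rewrite first_return_cat // sa eqxx andbT (motz_from_cat (k := 0)) //=.
rewrite -[flatten _]/(words n.+1) mem_words size_cat /= sa sb.
by have := ltn_ord i; lia.
Qed.

Lemma sum_from1 (R : nmodType) n (G : seq step -> R) :
  \sum_(w <- words n.+1 | motz_from 1 w) G w =
  \sum_(i < n.+1) \sum_(a <- words i | motz_from 0 a)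
      \sum_(b <- words (n - i) | motz_from 0 b) G (a ++ D :: b).
Proof.
rewrite -(eq_bigr _ (fun i _ => sum_from1_at i G)).
under eq_bigr do rewrite big_mkcondr.
rewrite exchange_big /= big_seq_cond [RHS]big_seq_cond.
apply: eq_bigr => w /andP [wW m1].
have [E1 _ _] := first_return_split (k := 0) (c := 0) m1.
have lt : (size (first_return 0 w).1 < n.+1)%N.
  by move: wW; rewrite -[flatten _]/(words n.+1) mem_words {1}E1 size_cat /=;
    move=> /eqP; lia.
by rewrite -big_mkcond /= (big_pred1 (Ordinal lt)).
Qed.

Lemma motz_coefE n :
  motz_coef n = \sum_(w <- words n | motz_from 0 w) 'X^(weight w).
Proof. by apply: eq_big => [w|w _]; rewrite ?motzkinE ?statE. Qed.

Lemma motz_coef0 : motz_coef 0 = 1.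
Proof. by rewrite motz_coefE /= big_cons big_nil /= addr0 expr0. Qed.

(* The contribution of the part b following the step D in U a D b: the pair
   (D, first step of b) counts unless b is empty. *)
Definition tail_coef m : {poly rat} :=
  \sum_(b <- words m | motz_from 0 b) 'X^(pair_weight D b + weight b).

Lemma tail_coefE m : tail_coef m = if m == 0%N then 1 else 'X * motz_coef m.
Proof.
case: m => [|m]; first by rewrite /tail_coef /= big_cons big_nil /= addr0 expr0.
rewrite /= motz_coefE mulr_sumr /tail_coef big_seq_cond [RHS]big_seq_cond.
apply: eq_bigr => w /andP []; rewrite mem_words; case: w => [|s w] //= _.
by case: s => //= _; rewrite add1n exprS.
Qed.

(* A nonempty Motzkin word is H b or U a D b; the first step contributes no
   pair weight with U, and the D step contributes through [tail_coef]. *)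
Lemma motz_coef_rec n : motz_coef n.+1 =
  tail_coef n +
  (if n is m.+1 then \sum_(i < m.+1) motz_coef i * tail_coef (m - i) else 0).
Proof.
rewrite motz_coefE sum_words_succ /= big_split /= addrC.
congr (_ + _).
  rewrite /tail_coef [RHS]big_mkcond /=; apply: eq_bigr => w _.
  by case: (motz_from 0 w) => //; case: w => [|[] ?].
have from_height1 : \sum_(w <- words n)
    ((if motz_from 1 w then 'X^(pair_weight U w + weight w) else 0) + 0) =
    \sum_(w <- words n | motz_from 1 w) 'X^(weight w) :> {poly rat}.
  rewrite [RHS]big_mkcond; apply: eq_bigr => w _; rewrite addr0.
  by case: w => [|s w].
rewrite from_height1; case: n {from_height1} => [|m].
  by rewrite /= big_cons big_nil.
rewrite sum_from1; apply: eq_bigr => i _.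
rewrite motz_coefE /tail_coef big_distrl /=; apply: eq_bigr => a _.
rewrite big_distrr /=; apply: eq_bigr => b _.
by rewrite weight_cat /= exprD.
Qed.

Lemma size_sqrt_seq p n : size (sqrt_seq p n) = n.+1.
Proof. by elim: n => [|n IH] //=; rewrite size_rcons IH. Qed.

Lemma nth_sqrt_seq p n i : (i <= n)%N -> nth 0 (sqrt_seq p n) i = fsqrt p i.
Proof.
elim: n i => [|n IH] i; first by rewrite leqn0 => /eqP ->.
rewrite leq_eqVlt => /orP [/eqP -> //|lt].
by rewrite /= nth_rcons size_sqrt_seq lt IH.
Qed.

Lemma fsqrtS p n : fsqrt p n.+1 = (2%:R^-1)%:P *
  (p n.+1 - \sum_(1 <= i < n.+1) fsqrt p i * fsqrt p (n.+1 - i)%N).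
Proof.
rewrite {1}/fsqrt /= nth_rcons size_sqrt_seq ltnn eqxx.
congr (_ * (_ - _)); apply: eq_big_nat => i /andP [i1 i2].
by rewrite !nth_sqrt_seq //; lia.
Qed.

Lemma fmul_self_succ (S : fps) n : S 0%N = 1 ->
  fmul S S n.+1 = 2%:R * S n.+1 + \sum_(1 <= i < n.+1) S i * S (n.+1 - i)%N.
Proof.
move=> S0; rewrite /fmul big_ord_recl big_ord_recr /= subn0 subnn S0 mul1r mulr1.
rewrite big_add1 /= big_mkord /bump /= add1n; ring.
Qed.

Lemma fsqrt_unique p (S : fps) : S 0%N = 1 -> (forall n, fmul S S n = p n) ->
  forall n, S n = fsqrt p n.
Proof.
move=> S0 HS; elim/ltn_ind => [[|n]] IH; first by [].
rewrite fsqrtS -(HS n.+1) fmul_self_succ //.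
have -> : \sum_(1 <= i < n.+1) fsqrt p i * fsqrt p (n.+1 - i)%N =
          \sum_(1 <= i < n.+1) S i * S (n.+1 - i)%N.
  by apply: eq_big_nat => i /andP [i1 i2]; rewrite !IH //; lia.
by rewrite addrK mulrA -polyC_natr -polyCM mulVf ?mul1r // pnatr_eq0.
Qed.

Lemma fmul_coef (A B : fps) (p q : {poly {poly rat}}) n :
  (forall i, (i <= n)%N -> A i = p`_i) -> (forall i, (i <= n)%N -> B i = q`_i) ->
  fmul A B n = (p * q)`_n.
Proof.
move=> HA HB; rewrite coefM /fmul; apply: eq_bigr => i _.
by rewrite HA ?HB // ?leq_subr // -ltnS.
Qed.

Definition f_trunc n : {poly {poly rat}} := \poly_(i < n.+1) motz_coef i.
Definition h_trunc n : {poly {poly rat}} := (1 - 'X)%:P + ('X)%:P * f_trunc n.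

Lemma f_trunc_coef n i : (i <= n)%N -> (f_trunc n)`_i = motz_coef i.
Proof. by move=> le; rewrite coef_poly ltnS le. Qed.

Lemma h_trunc_coef n j : (j <= n)%N -> (h_trunc n)`_j = tail_coef j.
Proof.
move=> le; rewrite coefD coefC coefCM f_trunc_coef // tail_coefE.
case: j le => [|j] _ /=; last by rewrite add0r.
by rewrite motz_coef0 mulr1 subrK.
Qed.

Lemma fh_trunc_coef n m : (m <= n)%N ->
  (f_trunc n * h_trunc n)`_m = \sum_(i < m.+1) motz_coef i * tail_coef (m - i).
Proof.
move=> le; rewrite coefM; apply: eq_bigr => i _.
rewrite f_trunc_coef ?h_trunc_coef //; first by apply: leq_trans (leq_subr _ _) le.
by apply: leq_trans le; rewrite -ltnS.
Qed.

Definition defect n : {poly {poly rat}} :=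
  1 + 'X * h_trunc n + 'X * ('X * (f_trunc n * h_trunc n)) - f_trunc n.

Lemma defect_coef n k : (k <= n)%N -> (defect n)`_k = 0.
Proof.
move=> le; rewrite /defect coefB !coefD coef1 !coefXM f_trunc_coef //.
case: k le => [|k] le /=; first by rewrite motz_coef0 !addr0 subrr.
rewrite h_trunc_coef ?motz_coef_rec ?add0r; last exact: ltnW.
case: k le => [|m] le /=; first by rewrite subrr.
by rewrite fh_trunc_coef ?subrr // (leq_trans _ le) // ltnW.
Qed.

Definition numer_p : {poly {poly rat}} := Poly [:: 1; - 'X; - (1 - 'X)].
Definition denom_p : {poly {poly rat}} := Poly [:: 0; 0; 2%:R * 'X].
Definition radicand_p : {poly {poly rat}} :=
  Poly [:: 1; 1] * Poly [:: 1; - (1 + 2%:R * 'X); - (1 - 'X ^+ 2); (1 - 'X) ^+ 2].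

Definition root_trunc n : {poly {poly rat}} := numer_p - denom_p * f_trunc n.

(* Completing the square in the functional equation. *)
Lemma root_trunc_sq n :
  root_trunc n * root_trunc n = radicand_p + (4%:R * 'X)%:P * ('X^2 * defect n).
Proof.
rewrite /root_trunc /numer_p /denom_p /radicand_p /defect /h_trunc /=.
rewrite !cons_poly_def.
set F := f_trunc n; ring.
Qed.

Definition candidate_root : fps := fun k => numer_poly k - fmul denom f_series k.

Lemma candidate_root0 : candidate_root 0%N = 1.
Proof. by rewrite /candidate_root /fmul big_ord1 /= mul0r subr0. Qed.

Lemma candidate_root_sq m : fmul candidate_root candidate_root m = radicand m.
Proof.
have coefS i : (i <= m)%N -> candidate_root i = (root_trunc m)`_i.
  move=> le; rewrite /candidate_root /root_trunc coefB coef_Poly.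
  congr (_ - _); apply: fmul_coef => j lej; first by rewrite coef_Poly.
  by rewrite f_trunc_coef // (leq_trans lej).
rewrite (fmul_coef coefS coefS) root_trunc_sq coefD coefCM coefXnM.
rewrite /radicand /radicand_p (fmul_coef (p := Poly [:: 1; 1])
  (q := Poly [:: 1; - (1 + 2%:R * 'X); - (1 - 'X ^+ 2); (1 - 'X) ^+ 2]));
  try by move=> i _; rewrite coef_Poly.
by rewrite defect_coef ?leq_subr // if_same mulr0 addr0.
Qed.

Theorem mainTheorem7 :
  forall n : nat,
    fmul denom f_series n = fsub numer_poly (fsqrt radicand) n.
Proof.
move=> n.
rewrite /fsub -(fsqrt_unique candidate_root0 candidate_root_sq n).
by rewrite /candidate_root opprB addrC subrK.
Qed.
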